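(* Let $H$ be a finite abelian group with $\operatorname{rank}(H)=s$, and let $(H,\mathcal S,\mathcal W)$ be a tame decomposition configuration. Then there is a positive integer $n$ and a tame decomposition configuration $(G,\mathcal T,\mathcal Z)$ with $G=(\mathbb{Z}/n\mathbb{Z})^s$ that has $(H,\mathcal S,\mathcal W)$ as a quotient. In particular, if $(H,\mathcal S)$ is a tame ramification configuration, then there is a tame ramification configuration $(G,\mathcal T)$ with $G=(\mathbb{Z}/n\mathbb{Z})^s$ for some positive integer $n$ which has $(H,\mathcal S)$ as a quotient.
   Context: For a finite group $G$, $\operatorname{rank}(G)$ is the minimal number of elements of $G$ which together with all their conjugates generate $G$ (for abelian $G$, the minimal number of generators). A (minimal) tame ramification configuration is a pair $(G,\mathcal T)$ with $G$ finite of rank $s$ and $\mathcal T=\{T_1,\dots,T_s\}$ cyclic subgroups of $G$ which together with their conjugates generate $G$. A (minimal) tame decomposition configuration is a triple $(G,\mathcal T,\mathcal Z)$ with $(G,\mathcal T)$ a tame ramification configuration and $\mathcal Z=\{Z_1,\dots,Z_s\}$ subgroups of $G$ with $T_i$ normal in $Z_i$ and $Z_i/T_i$ cyclic. $(H,\mathcal S)$ is a quotient of $(G,\mathcal T)$ if $\operatorname{rank}(H)=\operatorname{rank}(G)$ and there is a surjective homomorphism $\pi:G\to H$ with $\pi(T_i)=S_i$ for all $i$; $(H,\mathcal S,\mathcal W)$ is a quotient of $(G,\mathcal T,\mathcal Z)$ if moreover $\pi(Z_i)=W_i$ for all $i$. *)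

From mathcomp Require Import all_boot all_algebra all_fingroup all_solvable.
Set Implicit Arguments. Unset Strict Implicit. Unset Printing Implicit Defensive.
Local Open Scope group_scope.

(* rank(G): minimal number of elements of G which, together with all their
   G-conjugates, generate G.  The set G itself is always such a generating
   set, so taking #|G| as the default of the min does not change the value. *)
Definition grank (gT : finGroupType) (G : {group gT}) : nat :=
  \big[minn/#|G|]_(A : {set gT} | (A \subset G) && (<<class_support A G>> == G))
     #|A|.

Definition tame_ram_config (gT : finGroupType) (G : {group gT}) (s : nat)
    (T : 'I_s -> {group gT}) : Prop :=
  [/\ grank G = s,
      forall i, T i \subset G,
      forall i, cyclic (T i)
    & <<class_support (\bigcup_(i < s) T i) G>> = G].

Definition tame_dec_config (gT : finGroupType) (G : {group gT}) (s : nat)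
    (T Z : 'I_s -> {group gT}) : Prop :=
  [/\ tame_ram_config G T,
      forall i, Z i \subset G,
      forall i, T i <| Z i
    & forall i, cyclic (Z i / T i)].

Definition ram_quotient (gT hT : finGroupType) (s : nat)
    (G : {group gT}) (T : 'I_s -> {group gT})
    (H : {group hT}) (S : 'I_s -> {group hT}) : Prop :=
  grank H = grank G /\
  exists f : {morphism G >-> hT},
    f @* G = H /\ (forall i, f @* T i = S i).

Definition dec_quotient (gT hT : finGroupType) (s : nat)
    (G : {group gT}) (T Z : 'I_s -> {group gT})
    (H : {group hT}) (S W : 'I_s -> {group hT}) : Prop :=
  grank H = grank G /\
  exists f : {morphism G >-> hT},
    [/\ f @* G = H, (forall i, f @* T i = S i) & (forall i, f @* Z i = W i)].

(* (Z/nZ)^s, for n > 0, as the additive group of row vectors over 'I_n. *)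
Notation Zn_pow n s := 'rV['I_n.-1.+1]_s.

From mathcomp Require Import all_boot all_algebra all_fingroup all_solvable.
From mathcomp Require Import order.
Set Implicit Arguments. Unset Strict Implicit. Unset Printing Implicit Defensive.
Import FinRing.Theory.
Local Open Scope group_scope.

(* If S_i = <x_i>, the x_i generate the abelian group H, so e_i |-> x_i
   defines an epimorphism f from (Z/eZ)^s onto H, e the exponent of H.
   Choosing v_i with f v_i generating W_i modulo S_i, the groups <e_i> and
   <e_i, v_i> form a decomposition configuration of (Z/eZ)^s mapped by f onto
   (S, W).  Its rank is s: it is generated by the s unit rows, and a rank
   cannot increase under an epimorphism. *)

Section GeneratingRank.
Variable gT : finGroupType.
Implicit Types (A : {set gT}) (G : {group gT}).

Lemma grank_min G A :
  A \subset G -> <<class_support A G>> = G -> (grank G <= #|A|)%N.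
Proof.
move=> sAG genA; rewrite /grank.
by apply: (@Order.TotalTheory.bigmin_le_cond _ nat); rewrite sAG genA eqxx.
Qed.

Lemma class_support_abelian G A :
  abelian G -> A \subset G -> class_support A G = A.
Proof.
move=> abG sAG; apply/eqP; rewrite eqEsubset sub_class_support andbT.
rewrite class_supportEr; apply/bigcupsP=> x Gx.
by rewrite (normsP (sub_abelian_norm abG sAG)).
Qed.

Lemma grank_abelian_min G A :
  abelian G -> A \subset G -> <<A>> = G -> (grank G <= #|A|)%N.
Proof. by move=> abG sAG genA; rewrite grank_min ?class_support_abelian. Qed.

End GeneratingRank.

Section RankMorphim.
Variables (aT rT : finGroupType) (D : {group aT}) (f : {morphism D >-> rT}).
Implicit Types (A B : {set aT}) (G : {group aT}).

Lemma morphim_class_support A B : A \subset D -> B \subset D ->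
  f @* class_support A B = class_support (f @* A) (f @* B).
Proof.
move=> sAD sBD; rewrite !morphimEsub //; last first.
  rewrite class_supportEr; apply/bigcupsP=> x Bx.
  by rewrite -(conjGid (subsetP sBD x Bx)) conjSg.
apply/setP=> y; apply/imsetP/imset2P=> [[_ /imset2P[a b Aa Bb ->] ->]|].
  have [Da Db] := (subsetP sAD a Aa, subsetP sBD b Bb).
  by exists (f a) (f b); rewrite ?imset_f ?morphJ.
case=> _ _ /imsetP[a Aa ->] /imsetP[b Bb ->] ->.
have [Da Db] := (subsetP sAD a Aa, subsetP sBD b Bb).
by exists (a ^ b); rewrite ?memJ_class_support ?morphJ.
Qed.

Lemma grank_morphim G : G \subset D -> (grank (f @* G) <= grank G)%N.
Proof.
move=> sGD; rewrite {2}/grank; elim/big_ind: _ => [|m1 m2|A].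
- rewrite (leq_trans _ (leq_morphim f G)) ?grank_min //.
  by rewrite class_support_id genGid.
- by rewrite leq_min => -> ->.
case/andP=> sAG /eqP genA; have sAD := subset_trans sAG sGD.
rewrite (leq_trans _ (leq_morphim f A)) ?grank_min ?morphimS //.
rewrite -morphim_class_support // -morphim_gen ?genA //.
exact: subset_trans (class_support_subG sAG) sGD.
Qed.

End RankMorphim.

Lemma prodg_abelianM (gT : finGroupType) (G : {group gT}) (I : Type) (r : seq I)
    (F1 F2 : I -> gT) :
  abelian G -> (forall i, F1 i \in G) -> (forall i, F2 i \in G) ->
  \prod_(i <- r) (F1 i * F2 i) = (\prod_(i <- r) F1 i) * \prod_(i <- r) F2 i.
Proof.
move=> abG G1 G2; elim: r => [|a r IHr]; first by rewrite !big_nil mulg1.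
have cF2F1 : commute (F2 a) (\prod_(i <- r) F1 i).
  by apply: (centsP abG); rewrite ?G2 ?group_prod.
by rewrite !big_cons IHr -!mulgA; congr (_ * _); rewrite !mulgA cF2F1.
Qed.

Section RowUnits.
Variables n s : nat.
Let V := Zn_pow n s.

Definition row_unit (i : 'I_s) : V := (\row_j inZp (j == i))%R.

Lemma gen_row_units : <<[set row_unit i | i : 'I_s]>> = [set: V].
Proof.
apply/eqP; rewrite eqEsubset subsetT /=; apply/subsetP=> v _.
have -> : v = (\sum_(i < s) row_unit i *+ v ord0 i)%R.
  apply/rowP=> j; rewrite summxE (bigD1 j) //= big1 => [|i neij];
    rewrite ?GRing.addr0 mulmxnE mxE Zp_mulrn; apply: val_inj => /=.
    by rewrite eqxx modnMml mul1n modn_small.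
  by rewrite eq_sym (negPf neij).
elim/big_ind: _ => [|u w|i _]; first exact: group1.
  exact: groupM.
by apply: groupX; rewrite mem_gen ?imset_f.
Qed.

Lemma grank_rows_le : (grank [set: V] <= s)%N.
Proof.
have := grank_abelian_min (zmod_abelian _) (subsetT _) gen_row_units.
by move/leq_trans; apply; rewrite (leq_trans (leq_imset_card _ _)) ?card_ord.
Qed.

End RowUnits.

Section RowEvaluation.
Variables (gT : finGroupType) (G : {group gT}) (s n : nat) (x : 'I_s -> gT).
Hypotheses (abG : abelian G) (xG : forall i, x i \in G).
Hypotheses (n_gt0 : (0 < n)%N) (expG : (exponent G %| n)%N).

Let V := Zn_pow n s.

Lemma expg_mod_row i k : x i ^+ (k %% n.-1.+1) = x i ^+ k.
Proof.
apply: expg_mod; apply/eqP.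
by rewrite prednK // -order_dvdn (dvdn_trans (dvdn_exponent (xG i))).
Qed.

Definition row_eval (v : V) : gT := \prod_(i < s) x i ^+ v ord0 i.

Lemma row_evalM : {in [set: V] &, {morph row_eval : u v / u * v}}.
Proof.
move=> u v _ _; rewrite /row_eval -(prodg_abelianM _ abG) => [|i|i]; last 2 first.
- by rewrite groupX.
- by rewrite groupX.
by apply: eq_bigr => i _; rewrite zmodMgE mxE expg_mod_row expgD.
Qed.

Canonical row_eval_morphism := Morphism row_evalM.

Lemma row_eval_unit i : row_eval_morphism (row_unit n i) = x i.
Proof.
rewrite /= /row_eval (eq_bigr (fun j => if j == i then x i else 1)).
  by rewrite -big_mkcond big_pred1_eq.
by move=> j _; rewrite mxE /= expg_mod_row; case: eqP => [->|].
Qed.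

Lemma row_eval_onto : row_eval_morphism @* [set: V] = <<[set x i | i : 'I_s]>>.
Proof.
have -> : row_eval_morphism @* [set: V] =
          row_eval_morphism @* <<[set row_unit n i | i : 'I_s]>>.
  by rewrite gen_row_units.
rewrite morphim_gen ?subsetT // morphimEsub ?subsetT //.
by rewrite -imset_comp (eq_imset _ row_eval_unit).
Qed.

End RowEvaluation.

Section Configurations.
Variable gT : finGroupType.
Implicit Types (G T Z : {group gT}).

Lemma cyclic_quotient_joinE T Z :
  T <| Z -> cyclic (Z / T) -> exists2 z, z \in Z & Z :=: T <*> <[z]>.
Proof.
move=> nTZ /cyclicP[zb defZb].
have : zb \in Z / T by rewrite defZb cycle_id.
case/morphimP=> z Nz Zz def_zb; rewrite {}def_zb in defZb; exists z => //.
have nTz : <[z]> \subset 'N(T) by rewrite cycle_subG.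
apply: (quotient_inj nTZ); first by rewrite normalYl.
by rewrite quotientYidl // quotient_cycle.
Qed.

Lemma abelian_tame_ram_config G s (T : 'I_s -> {group gT}) :
  abelian G -> tame_ram_config G T ->
  exists x : 'I_s -> gT,
    [/\ forall i, x i \in G, forall i, T i :=: <[x i]>
      & <<[set x i | i : 'I_s]>> = G].
Proof.
move=> abG [_ sTG cycT genG].
have /fin_all_exists[x defT] i : exists x, T i :=: <[x]> by apply/cyclicP.
have xG i : x i \in G by rewrite (subsetP (sTG i)) // defT cycle_id.
exists x; split=> //; rewrite -[RHS]genG class_support_abelian //; last first.
  by apply/bigcupsP=> i _.
apply/eqP; rewrite eqEsubset !gen_subG; apply/andP; split.
  apply/subsetP=> _ /imsetP[i _ ->]; apply: mem_gen.
  by apply/bigcupP; exists i; rewrite ?defT ?cycle_id.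
by apply/bigcupsP=> i _; rewrite defT cycle_subG mem_gen ?imset_f.
Qed.

Lemma abelian_tame_dec_config G s (t z : 'I_s -> gT) :
  abelian G -> grank G = s -> (forall i, t i \in G) -> (forall i, z i \in G) ->
  <<[set t i | i : 'I_s]>> = G ->
  tame_dec_config G (fun i => <[t i]>%G) (fun i => (<[t i]> <*> <[z i]>)%G).
Proof.
move=> abG rkG tG zG genG.
have nTG i (B : {set gT}) : B \subset G -> B \subset 'N(<[t i]>).
  by move=> sBG; rewrite (subset_trans sBG) ?sub_abelian_norm ?cycle_subG.
split=> [|i|i|i] /=.
- split=> // [i|i|]; rewrite ?cycle_subG ?cycle_cyclic //.
  rewrite class_support_abelian //; last by apply/bigcupsP=> i _; rewrite cycle_subG.
  apply/eqP; rewrite eqEsubset gen_subG; apply/andP; split.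
    by apply/bigcupsP=> i _; rewrite cycle_subG.
  rewrite -{1}genG genS //.
  by apply/subsetP=> _ /imsetP[i _ ->]; apply/bigcupP; exists i; rewrite ?cycle_id.
- by rewrite join_subG !cycle_subG tG zG.
- by rewrite normalYl nTG ?cycle_subG.
by rewrite quotientYidl ?nTG ?cycle_subG // quotient_cyclic ?cycle_cyclic.
Qed.

Lemma tame_dec_config_refl G s (T : 'I_s -> {group gT}) :
  tame_ram_config G T -> tame_dec_config G T T.
Proof.
move=> ramT; have [_ sTG _ _] := ramT.
by split=> // i; rewrite ?normal_refl ?trivg_quotient ?cyclic1.
Qed.

End Configurations.

Lemma abelian_tame_dec_config_cover (hT : finGroupType) (H : {group hT})
    (s : nat) (S W : 'I_s -> {group hT}) :
  abelian H -> grank H = s -> tame_dec_config H S W ->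
  exists T Z : 'I_s -> {group Zn_pow (exponent H) s},
    tame_dec_config [set: Zn_pow (exponent H) s]%G T Z /\
    dec_quotient [set: Zn_pow (exponent H) s]%G T Z H S W.
Proof.
move=> abH rkH [ramS sWH nSW cycW].
have [x [xH defS genH]] := abelian_tame_ram_config abH ramS.
pose f := row_eval_morphism abH xH (exponent_gt0 H) (dvdnn _).
have fV : f @* [set: _] = H by rewrite row_eval_onto.
have rkV : grank [set: Zn_pow (exponent H) s]%G = s.
  apply/eqP; rewrite eqn_leq grank_rows_le -{1}rkH.
  by have := grank_morphim f (subsetT [set: _]); rewrite (group_inj fV).
have /fin_all_exists2[w wW defW] i : exists2 w, w \in W i & W i :=: S i <*> <[w]>.
  exact: cyclic_quotient_joinE.
have /fin_all_exists[v fv] i : exists v, f v = w i.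
  have : w i \in f @* [set: _] by rewrite fV (subsetP (sWH i)) ?wW.
  by case/morphimP=> v _ _ ->; exists v.
exists (fun i => <[row_unit _ i]>%G), (fun i => (<[row_unit _ i]> <*> <[v i]>)%G).
split.
  apply: abelian_tame_dec_config (zmod_abelian _) rkV _ _ (gen_row_units _ _);
  by move=> i; rewrite inE.
split; first by rewrite rkV.
exists f; split=> // i /=; rewrite ?morphimY ?subsetT // !morphim_cycle ?in_setT //.
  by rewrite row_eval_unit defS.
by rewrite row_eval_unit fv defW defS.
Qed.

Theorem proposition3p1 (hT : finGroupType) (H : {group hT}) (s : nat) :
  abelian H -> grank H = s ->
  (forall S W : 'I_s -> {group hT},
     tame_dec_config H S W ->
     exists n : nat, (0 < n)%N /\
       exists T Z : 'I_s -> {group Zn_pow n s},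
         tame_dec_config [set: Zn_pow n s]%G T Z /\
         dec_quotient [set: Zn_pow n s]%G T Z H S W) /\
  (forall S : 'I_s -> {group hT},
     tame_ram_config H S ->
     exists n : nat, (0 < n)%N /\
       exists T : 'I_s -> {group Zn_pow n s},
         tame_ram_config [set: Zn_pow n s]%G T /\
         ram_quotient [set: Zn_pow n s]%G T H S).
Proof.
move=> abH rkH; split=> [S W decSW | S ramS].
  exists (exponent H); split; first exact: exponent_gt0.
  exact: abelian_tame_dec_config_cover.
have [T [Z [[ramT _ _ _] [rkV [f [fV fT _]]]]]] :=
  abelian_tame_dec_config_cover abH rkH (tame_dec_config_refl ramS).
exists (exponent H); split; first exact: exponent_gt0.
by exists T; split=> //; split=> //; exists f.
Qed.
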